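(* Assume the mixed-integer semidefinite program $$\min\{\langle C,X\rangle : \mathcal{A}(X)=b,\ X\succeq \mathbf{0},\ X_{ij}\in B_{ij}\ \forall (i,j)\in\mathcal{J}\}\qquad(\mathrm{MISDP})$$ is feasible with bounded feasible set $\mathcal{F}_{MISDP}$ and optimal value $z_{MISDP}$. Let $\mathcal{F}_{SDP}=\{X:\mathcal{A}(X)=b,\ X\succeq\mathbf{0},\ l_{ij}\le X_{ij}\le u_{ij}\ \forall(i,j)\in\mathcal{J}\}$ with $z_{SDP}=\min\{\langle C,X\rangle: X\in\mathcal{F}_{SDP}\}$, and $\mathcal{F}_{LD}=\{X:\mathcal{A}_1(X)=b_1,\ X\succeq\mathbf{0},\ X\in\mathrm{conv}(P)\}$ with $z_{LD}=\min\{\langle C,X\rangle: X\in\mathcal{F}_{LD}\}$. Let $\chi^*_{MISDP}$ and $\chi^*_{LD}$ be the sets of optimal solutions of (MISDP) and of $\min\{\langle C,X\rangle:X\in\mathcal{F}_{LD}\}$, respectively. Then (i) $z_{LD}=z_{MISDP}$ if and only if $-C\in\mathcal{N}_{\mathcal{F}_{LD}}(X^* )$ for all $X^*\in\chi^*_{MISDP}$; (ii) $z_{SDP}=z_{LD}$ if and only if $-C\in\mathcal{N}_{\mathcal{F}_{SDP}}(X^* )$ for all $X^*\in\chi^*_{LD}$.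
   Context: $\mathcal{S}^n$ denotes the real symmetric $n\times n$ matrices with $\langle X,Y\rangle=\mathrm{tr}(XY)$; $X\succeq\mathbf{0}$ means positive semidefinite. $C\in\mathcal{S}^n$, $b\in\mathbb{R}^m$, $\mathcal{A}:\mathcal{S}^n\to\mathbb{R}^m$ linear with $\mathcal{A}(X)_i=\langle A_i,X\rangle$. $\mathcal{J}\subseteq[n]\times[n]$ and for $(i,j)\in\mathcal{J}$, $B_{ij}\subseteq\mathbb{Z}$ is a finite set with smallest element $l_{ij}$ and largest element $u_{ij}$. The constraints $\mathcal{A}(X)=b$ are split into $\mathcal{A}_1(X)=b_1$ ($b_1\in\mathbb{R}^{m_1}$) and $\mathcal{A}_2(X)=b_2$, and $P=\{X\in\mathcal{S}^n:\mathcal{A}_2(X)=b_2,\ X_{ij}\in B_{ij}\ \forall(i,j)\in\mathcal{J}\}$, assumed bounded. (The value $z_{LD}$ coincides with the Lagrangian dual value $\sup_{S\succeq\mathbf{0},\lambda}\min_{X\in P}\{\langle C,X\rangle-\langle S,X\rangle+\lambda^\top(\mathcal{A}_1(X)-b_1)\}$.) For a convex set $K\subseteq\mathcal{S}^n$ and $X\in K$, the normal cone is $\mathcal{N}_K(X)=\{Z\in\mathcal{S}^n:\langle Z,X\rangle\ge\langle Z,Y\rangle\ \forall Y\in K\}$. *)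

From mathcomp Require Import all_boot all_order all_algebra.
From mathcomp Require Import classical_sets reals constructive_ereal ereal.
Set Implicit Arguments. Unset Strict Implicit. Unset Printing Implicit Defensive.
Import Order.TTheory GRing.Theory Num.Theory.
Local Open Scope ring_scope.
Local Open Scope classical_set_scope.

Section MISDP.
Variables (R : realType) (n : nat).
Notation mat := 'M[R]_n.

Definition inner (X Y : mat) : R := \tr (X *m Y).

Definition symm (X : mat) : Prop := X^T = X.

Definition psd (X : mat) : Prop :=
  symm X /\ forall v : 'cV[R]_n, 0 <= (v^T *m X *m v) 0 0.

Definition lin_sat (m : nat) (A : 'I_m -> mat) (b : 'I_m -> R) (X : mat) : Prop :=
  forall i, inner (A i) X = b i.

Definition int_sat (J : {set 'I_n * 'I_n}) (B : 'I_n -> 'I_n -> seq int)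
  (X : mat) : Prop :=
  forall i j, (i, j) \in J -> exists2 z : int, z \in B i j & X i j = z%:~R.

Definition box_sat (J : {set 'I_n * 'I_n}) (l u : 'I_n -> 'I_n -> int)
  (X : mat) : Prop :=
  forall i j, (i, j) \in J -> (l i j)%:~R <= X i j <= (u i j)%:~R.

Definition conv (S : set mat) : set mat :=
  [set X | exists k (w : 'I_k -> R) (Y : 'I_k -> mat),
      [/\ forall i, 0 <= w i, \sum_(i < k) w i = 1, forall i, S (Y i)
        & X = \sum_(i < k) w i *: Y i]].

Definition bounded (S : set mat) : Prop :=
  exists M : R, forall X, S X -> forall i j, `|X i j| <= M.

Definition optval (C : mat) (S : set mat) : \bar R :=
  ereal_inf [set (inner C X)%:E | X in S].

Definition argmins (C : mat) (S : set mat) : set mat :=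
  [set X | S X /\ forall Y, S Y -> inner C X <= inner C Y].

Definition normal_cone (K : set mat) (X : mat) : set mat :=
  [set Z | symm Z /\ forall Y, K Y -> inner Z Y <= inner Z X].

Section Sets.
Variables (m1 m2 : nat) (A1 : 'I_m1 -> mat) (b1 : 'I_m1 -> R)
  (A2 : 'I_m2 -> mat) (b2 : 'I_m2 -> R) (J : {set 'I_n * 'I_n})
  (B : 'I_n -> 'I_n -> seq int) (l u : 'I_n -> 'I_n -> int).

Definition F_MISDP : set mat :=
  [set X | [/\ lin_sat A1 b1 X, lin_sat A2 b2 X, psd X & int_sat J B X]].

Definition F_SDP : set mat :=
  [set X | [/\ lin_sat A1 b1 X, lin_sat A2 b2 X, psd X & box_sat J l u X]].

Definition P_set : set mat :=
  [set X | [/\ symm X, lin_sat A2 b2 X & int_sat J B X]].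

Definition F_LD : set mat :=
  [set X | [/\ lin_sat A1 b1 X, psd X & conv P_set X]].

End Sets.
End MISDP.

(* Since F_MISDP ⊆ F_LD ⊆ F_SDP (affine and box constraints survive convex
   combinations), both equivalences are instances of one fact about nested sets
   S ⊆ T: -C lies in the normal cone of T at X exactly when X minimises <C,.>
   over T, so if S has a minimiser, the infima of <C,.> over S and T agree iff
   every minimiser over S also minimises over T.  Minimisers exist by
   compactness: by Carathéodory's theorem in the n^2-dimensional space of
   matrices, conv P is the continuous image of the compact set of
   (n^2+1)-point convex combinations of the compact set P, so F_LD is compact,
   and F_MISDP is a closed subset of F_LD. *)
From mathcomp Require Import all_boot all_order all_algebra.
From mathcomp Require Import boolp classical_sets reals.
From mathcomp Require Import constructive_ereal ereal.
From mathcomp Require Import topology normedtype derive.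
Import Order.TTheory GRing.Theory Num.Theory.
Import numFieldTopology.Exports numFieldNormedType.Exports.
Local Open Scope ring_scope.
Local Open Scope classical_set_scope.
Set Implicit Arguments. Unset Strict Implicit.

Section ConvexWeights.
Variables (R : realDomainType) (k : nat) (w : 'I_k -> R).
Hypotheses (w_ge0 : forall i, 0 <= w i) (w_sum1 : \sum_(i < k) w i = 1).

Lemma convex_weight_le1 i : w i <= 1.
Proof. by rewrite -w_sum1 (bigD1 i) //= lerDl; apply: sumr_ge0 => j _. Qed.

Lemma convex_comb_const (c : R) : \sum_(i < k) w i * c = c.
Proof. by rewrite -mulr_suml w_sum1 mul1r. Qed.

Lemma convex_comb_between (y : 'I_k -> R) lo hi :
  (forall i, lo <= y i <= hi) -> lo <= \sum_(i < k) w i * y i <= hi.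
Proof.
move=> y_in; rewrite -(convex_comb_const lo) -(convex_comb_const hi).
apply/andP; split; apply: ler_sum => i _; apply: ler_wpM2l;
  by [exact: w_ge0 | case/andP: (y_in i)].
Qed.

End ConvexWeights.

Lemma exists_gt0_sumr_eq0 (R : realDomainType) k (mu : 'I_k -> R) j :
  \sum_(i < k) mu i = 0 -> mu j != 0 -> exists i, 0 < mu i.
Proof.
move=> mu_sum0 mu_j; apply: contrapT => no_pos.
have mu_le0 i : 0 <= - mu i.
  by rewrite oppr_ge0 leNgt; apply/negP => mu_i; apply: no_pos; exists i.
have sumN_eq0 : \sum_(i < k) - mu i = 0 by rewrite sumrN mu_sum0 oppr0.
move/negP: mu_j; apply; rewrite -oppr_eq0; apply/eqP.
exact: psumr_eq0P (fun i _ => mu_le0 i) sumN_eq0 j isT.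
Qed.

Section Objective.
Variables (R : realType) (n : nat).
Notation mat := 'M[R]_n.

Lemma inner_sumZr k (A : mat) (w : 'I_k -> R) (Y : 'I_k -> mat) :
  inner A (\sum_(i < k) w i *: Y i) = \sum_(i < k) w i * inner A (Y i).
Proof.
rewrite /inner mulmx_sumr raddf_sum; apply: eq_bigr => i _.
by rewrite -scalemxAr; apply: mxtraceZ.
Qed.

Lemma innerNl (A X : mat) : inner (- A) X = - inner A X.
Proof. by rewrite /inner mulNmx; apply: (raddfN (@mxtrace _ n)). Qed.

Lemma symmN (A : mat) : symm A -> symm (- A).
Proof. by rewrite /symm => A_symm; rewrite linearN /= A_symm. Qed.

Lemma normal_coneNP (K : set mat) (C X : mat) : symm C ->
  normal_cone K X (- C) <-> forall Y, K Y -> inner C X <= inner C Y.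
Proof.
move=> C_symm; rewrite /normal_cone /=.
split=> [[_ X_max] Y /X_max | X_min]; first by rewrite !innerNl lerN2.
by split=> [|Y /X_min]; [exact: symmN | rewrite !innerNl lerN2].
Qed.

Lemma optval_argmins (C : mat) (S : set mat) X :
  argmins C S X -> optval C S = (inner C X)%:E.
Proof.
move=> [SX X_min]; apply/eqP; rewrite eq_le; apply/andP; split.
  by apply: ereal_inf_lbound; exists X.
by apply: le_ereal_inf_tmp => _ [Y SY <-]; rewrite lee_fin; apply: X_min.
Qed.

Lemma optval_le_subset (C : mat) (S T : set mat) :
  S `<=` T -> (optval C T <= optval C S)%E.
Proof.
move=> ST; apply: le_ereal_inf_tmp => _ [X SX <-].
by apply: ereal_inf_lbound; exists X => //; apply: ST.
Qed.

Lemma optval_eq_normal_coneP (C : mat) (S T : set mat) :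
  symm C -> S `<=` T -> argmins C S !=set0 ->
  optval C T = optval C S <->
    (forall X, argmins C S X -> normal_cone T X (- C)).
Proof.
move=> C_symm ST [X0 X0_min]; split=> [eq_opt X X_min | T_min].
  apply/normal_coneNP => // Y TY.
  rewrite -lee_fin -(optval_argmins X_min) -eq_opt.
  by apply: ereal_inf_lbound; exists Y.
apply/eqP; rewrite eq_le optval_le_subset //= (optval_argmins X0_min).
apply: le_ereal_inf_tmp => _ [Y TY <-]; rewrite lee_fin.
by have /normal_coneNP := T_min X0 X0_min; apply.
Qed.

End Objective.

Section Caratheodory.
Variables (R : realType) (n : nat).
Notation mat := 'M[R]_n.
Variable S : set mat.

Definition convn k (X : mat) := exists (w : 'I_k -> R) (Y : 'I_k -> mat),
  [/\ forall i, 0 <= w i, \sum_(i < k) w i = 1, forall i, S (Y i)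
    & X = \sum_(i < k) w i *: Y i].

Lemma sub_conv : S `<=` conv S.
Proof.
move=> X SX; exists 1%N, (fun=> 1), (fun=> X); split.
- by move=> _; exact: ler01.
- by rewrite big_ord1.
- by [].
- by rewrite big_ord1 scale1r.
Qed.

Lemma convnS k X : convn k X -> convn k.+1 X.
Proof.
case: k => [|k] [w [Y [w_ge0 w_sum1 SY ->]]].
  by move: w_sum1; rewrite big_ord0 => /eqP; rewrite eq_sym oner_eq0.
exists (fun i : 'I_k.+2 => if (i < k.+1)%N then w (inord i) else 0),
  (fun i => Y (inord i)); split.
- by move=> i; case: ifP.
- rewrite big_ord_recr /= ltnn addr0 -w_sum1; apply: eq_bigr => i _.
  by rewrite ltn_ord; congr w; apply: val_inj; rewrite /= inordK.
- by move=> i; exact: SY.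
- rewrite [RHS]big_ord_recr /= ltnn scale0r addr0; apply: eq_bigr => i _.
  have -> : (inord (widen_ord (leqnSn k.+1) i) : 'I_k.+1) = i.
    by apply: val_inj; rewrite /= inordK.
  by rewrite ltn_ord.
Qed.

Lemma convn_le k m X : (k <= m)%N -> convn k X -> convn m X.
Proof.
elim: m => [|m IH]; first by rewrite leqn0 => /eqP ->.
by rewrite leq_eqVlt ltnS => /predU1P[-> // | /IH k_m /k_m /convnS].
Qed.

Lemma affinely_dependent k (Y : 'I_k -> mat) : ((n * n).+1 < k)%N ->
  exists mu : 'I_k -> R, [/\ \sum_(i < k) mu i = 0,
    \sum_(i < k) mu i *: Y i = 0 & exists i, 0 < mu i].
Proof.
move=> lt_k.
pose V := \matrix_(i < k) mxvec (Y i).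
(* The k > 1 + n^2 rows (1, vec (Y i)) of M are linearly dependent. *)
pose M := row_mx (const_mx 1 : 'cV[R]_k) V.
have ker_nz : kermx M != 0.
  rewrite kermx_eq0 /row_free ltn_eqF //.
  by apply: leq_ltn_trans (rank_leq_col M) _; rewrite add1n.
have [mu /sub_kermxP] := rowV0Pn ker_nz.
rewrite mul_mx_row => /eqP; rewrite row_mx_eq0 => /andP[/eqP mu1 /eqP muV].
move=> /rV0Pn[j mu_j].
have mu_sum0 : \sum_(i < k) mu 0 i = 0.
  transitivity ((mu *m (const_mx 1 : 'cV[R]_k)) 0 0); last by rewrite mu1 mxE.
  by rewrite mxE; apply: eq_bigr => i _; rewrite mxE mulr1.
exists (fun i => mu 0 i); split=> //; last first.
  exact: exists_gt0_sumr_eq0 mu_sum0 mu_j.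
apply/matrixP => a b; rewrite summxE [RHS]mxE.
transitivity ((mu *m V) 0 (mxvec_index a b)); last by rewrite muV mxE.
rewrite mulmx_sum_row summxE; apply: eq_bigr => i _.
by rewrite !mxE mxvecE.
Qed.

Lemma convn_drop k X (w : 'I_k.+1 -> R) (Y : 'I_k.+1 -> mat) i0 :
  w i0 = 0 -> (forall i, 0 <= w i) -> \sum_(i < k.+1) w i = 1 ->
  (forall i, S (Y i)) -> X = \sum_(i < k.+1) w i *: Y i -> convn k X.
Proof.
move=> w_i0 w_ge0 w_sum1 SY ->.
exists (fun j => w (lift i0 j)), (fun j => Y (lift i0 j)); split.
- by move=> j; exact: w_ge0.
- by move: w_sum1; rewrite (bigD1_ord i0) //= w_i0 add0r.
- by move=> j; exact: SY.
- by rewrite (bigD1_ord i0) //= w_i0 scale0r add0r.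
Qed.

(* Move along an affine dependence until the first weight hits zero. *)
Lemma convn_pred k X : ((n * n).+1 <= k)%N -> convn k.+1 X -> convn k X.
Proof.
move=> le_k [w [Y [w_ge0 w_sum1 SY eX]]].
have [mu [mu_sum0 mu_comb0 [i mu_i]]] := @affinely_dependent k.+1 Y le_k.
have [i1 mu_i1 i1_min] :=
  @arg_minP _ _ _ i (fun j => 0 < mu j) (fun j => w j / mu j) mu_i.
set t := w i1 / mu i1.
have t_ge0 : 0 <= t by rewrite divr_ge0 // ltW.
pose w' j := w j - t * mu j.
have w'_i1 : w' i1 = 0 by rewrite /w' /t divfK ?subrr // gt_eqF.
have w'_ge0 j : 0 <= w' j.
  rewrite subr_ge0; have [mu_j | mu_j] := ltrP 0 (mu j).
    by rewrite -ler_pdivlMr //; apply: i1_min.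
  by apply: le_trans (w_ge0 j); apply: mulr_ge0_le0.
have w'_sum1 : \sum_(j < k.+1) w' j = 1.
  by rewrite sumrB -mulr_sumr mu_sum0 mulr0 subr0.
have eX' : X = \sum_(j < k.+1) w' j *: Y j.
  rewrite eX /w'; under [RHS]eq_bigr do rewrite scalerBl -scalerA.
  by rewrite sumrB -scaler_sumr mu_comb0 scaler0 subr0.
exact: convn_drop w'_i1 w'_ge0 w'_sum1 SY eX'.
Qed.

Lemma convn_ge k X : ((n * n).+1 <= k)%N -> convn k X -> convn (n * n).+1 X.
Proof.
elim: k => [|k IH]; first by rewrite ltn0.
rewrite leq_eqVlt ltnS => /predU1P[<- // | le_k].
by move=> /(convn_pred le_k) /(IH le_k).
Qed.

Lemma caratheodory X : conv S X -> convn (n * n).+1 X.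
Proof.
case=> k X_k; have [le_k | /ltnW lt_k] := leqP k (n * n).+1.
  exact: convn_le le_k X_k.
exact: convn_ge lt_k X_k.
Qed.

Lemma lin_sat_conv m (A : 'I_m -> mat) (b : 'I_m -> R) :
  S `<=` lin_sat A b -> conv S `<=` lin_sat A b.
Proof.
move=> S_lin _ [k [w [Y [_ w_sum1 SY ->]]]] i.
rewrite inner_sumZr -(convex_comb_const w_sum1 (b i)).
by apply: eq_bigr => t _; rewrite (S_lin _ (SY t)).
Qed.

Lemma box_sat_conv J (l u : 'I_n -> 'I_n -> int) :
  S `<=` box_sat J l u -> conv S `<=` box_sat J l u.
Proof.
move=> S_box _ [k [w [Y [w_ge0 w_sum1 SY ->]]]] i j ij.
rewrite summxE (eq_bigr (fun t => w t * Y t i j)); last first.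
  by move=> t _; rewrite mxE.
by apply: convex_comb_between => // t; exact: S_box (SY t) i j ij.
Qed.

End Caratheodory.

Section Topology.
Variable R : realType.

Lemma continuous_fst (U V : topologicalType) : continuous (@fst U V).
Proof. by move=> [u v]; exact: cvg_fst. Qed.

Lemma continuous_snd (U V : topologicalType) : continuous (@snd U V).
Proof. by move=> [u v]; exact: cvg_snd. Qed.

Lemma continuous_sum (T : topologicalType) (V : normedModType R) (I : Type)
    (r : seq I) (F : I -> T -> V) :
  (forall i, continuous (F i)) -> continuous (fun t => \sum_(i <- r) F i t).
Proof. by move=> F_cont; apply: (continuous_big add_continuous) => i _. Qed.

Lemma closed_forall (T : topologicalType) (I : Type) (P : I -> set T) :
  (forall i, closed (P i)) -> closed [set x | forall i, P i x].
Proof.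
move=> P_closed; have -> : [set x | forall i, P i x] = \bigcap_i P i.
  by apply/seteqP; split=> [x Px i _ | x Px i]; apply: Px.
exact: closed_bigI.
Qed.

Lemma closed_and3 (T : topologicalType) (P Q U : set T) :
  closed P -> closed Q -> closed U -> closed [set x | [/\ P x, Q x & U x]].
Proof.
move=> P_closed Q_closed U_closed.
have -> : [set x | [/\ P x, Q x & U x]] = P `&` (Q `&` U).
  by apply/seteqP; split=> x /=; [case | case=> ? []].
by do 2![apply: closedI => //].
Qed.

Lemma closed_and4 (T : topologicalType) (P Q U W : set T) :
  closed P -> closed Q -> closed U -> closed W ->
  closed [set x | [/\ P x, Q x, U x & W x]].
Proof.
move=> P_closed Q_closed U_closed W_closed.
have -> : [set x | [/\ P x, Q x, U x & W x]] = P `&` (Q `&` (U `&` W)).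
  by apply/seteqP; split=> x /=; [case | case=> ? [? []]].
by do 3![apply: closedI => //].
Qed.

Lemma closed_eqf (T : topologicalType) (f g : T -> R) :
  continuous f -> continuous g -> closed [set x | f x = g x].
Proof.
move=> f_cont g_cont.
have -> : [set x | f x = g x] = (fun x => f x - g x) @^-1` [set 0].
  apply/seteqP; split=> x /=; first by move=> ->; rewrite subrr.
  by move/eqP; rewrite subr_eq0 => /eqP.
apply: preimage_closed; last exact: closed_eq.
by move=> x _; exact: continuousB (f_cont x) (g_cont x).
Qed.

Lemma closed_ge0f (T : topologicalType) (f : T -> R) :
  continuous f -> closed [set x | 0 <= f x].
Proof.
move=> f_cont; apply: (@preimage_closed _ _ f [set y | 0 <= y]).
  by move=> x _; exact: f_cont.
exact: closed_ge.
Qed.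

Lemma compact_ptws (I : eqType) (T : topologicalType) (A : set T) :
  compact A -> compact [set f : {ptws I -> T} | forall i, A (f i)].
Proof. by move=> A_compact; exact: (@tychonoff _ (fun=> T) _ (fun=> A_compact)).
Qed.

Lemma mx_continuous (T : topologicalType) p q (f : T -> 'M[R]_(p, q)) :
  (forall i j, continuous (fun t => f t i j)) -> continuous f.
Proof.
move=> f_cont x; apply/cvgrPdist_lt => e e_gt0.
have : \forall t \near x, forall ij : 'I_p * 'I_q,
    `|f x ij.1 ij.2 - f t ij.1 ij.2| < e.
  apply: filter_forall => ij.
  exact: (@cvgr_dist_lt _ _ _ _ _ _ _ (f_cont ij.1 ij.2 x) _ e_gt0).
apply: filterS => t fx_ft; rewrite -[`|_|]/(mx_norm _) mx_normrE.
elim/big_ind: _ => // [a b a_e b_e | ij _]; first by rewrite gt_max a_e b_e.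
by rewrite !mxE.
Qed.

Lemma vec_mx_continuous p q : continuous (@vec_mx R p q).
Proof.
apply: mx_continuous => i j.
have -> : (fun v : 'rV[R]_(p * q) => vec_mx v i j) =
    fun v => v 0 (mxvec_index i j).
  by apply/funext => v; rewrite mxE.
exact: coord_continuous.
Qed.

Lemma bounded_closed_compact_mx p q (S : set 'M[R]_(p, q)) :
  (exists M, forall X, S X -> forall i j, `|X i j| <= M) -> closed S ->
  compact S.
Proof.
move=> [M S_le] S_closed; pose V := vec_mx @^-1` S.
have -> : S = vec_mx @` V.
  rewrite image_preimage // -subTset => X _.
  by exists (mxvec X); last exact: mxvecK.
apply: continuous_compact; first exact/continuous_subspaceT/vec_mx_continuous.
apply: bounded_closed_compact.
  apply: filterS (nbhs_pinfty_ge (num_real (Num.max M 0))) => r Mr v.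
  move=> /S_le Sv_le.
  have M_le_r : M <= r by apply: le_trans Mr; rewrite le_max lexx.
  rewrite /= -[`|_|]/(mx_norm _) mx_normrE; apply: bigmax_le => [|[a c] _].
    by apply: le_trans Mr; rewrite le_max lexx orbT.
  rewrite (ord1 a) /=; case: (mxvec_indexP c) => i j.
  by apply: le_trans M_le_r; have := Sv_le i j; rewrite mxE.
by apply: preimage_closed => // v _; exact: vec_mx_continuous.
Qed.

Lemma inner_continuous n (A : 'M[R]_n) : continuous (inner A).
Proof.
have -> : inner A = fun X => \sum_i \sum_j A i j * X j i.
  apply/funext => X; rewrite /inner /mxtrace.
  by apply: eq_bigr => i _; rewrite mxE.
apply: continuous_sum => i; apply: continuous_sum => j X.
by apply: continuousM; [exact: cst_continuous | exact: coord_continuous].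
Qed.

Lemma compact_argmins n (C : 'M[R]_n) (S : set 'M[R]_n) :
  S !=set0 -> compact S -> argmins C S !=set0.
Proof.
move=> S_ne0 S_compact.
have [X SX X_min] := compact_EVT_min S_ne0 S_compact
  (continuous_subspaceT (@inner_continuous n C)).
by exists X; split=> [|Y SY]; [rewrite -inE | apply: X_min; rewrite inE].
Qed.

Section CompactConvn.
Variables (n k : nat).
Local Notation points := {ptws 'I_k -> (R * 'M[R]_n)%type}.

Lemma compact_convn (S : set 'M[R]_n) : compact S -> compact (convn S k).
Proof.
move=> S_compact.
have weight_cont i : continuous (fun f : points => (f i).1).
  move=> f; exact: continuous_comp (@proj_continuous _ _ i f)
    (@continuous_fst _ _ (f i)).
have point_cont i : continuous (fun f : points => (f i).2).
  move=> f; exact: continuous_comp (@proj_continuous _ _ i f)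
    (@continuous_snd _ _ (f i)).
pose comb (f : points) := \sum_(i < k) (f i).1 *: (f i).2.
have comb_cont : continuous comb.
  apply: continuous_sum => i f.
  exact: continuousZ (weight_cont i f) (point_cont i f).
pose box := [set f : points | forall i, (`[0, 1] `*` S) (f i)].
pose simplex := [set f : points | \sum_(i < k) (f i).1 = 1].
have box_compact : compact box.
  rewrite /box; apply: compact_ptws; apply: compact_setX => //.
  exact: segment_compact.
have simplex_closed : closed simplex.
  rewrite /simplex.
  by apply: closed_eqf; [exact: continuous_sum | exact: cst_continuous].
have -> : convn S k = comb @` (box `&` simplex).
  apply/seteqP; split=> [X [w [Y [w_ge0 w_sum1 SY ->]]] | _ [f [f_in f1] <-]].
    exists (fun i => (w i, Y i)) => //; split=> // i; split=> //=.
    by rewrite in_itv /= w_ge0 (convex_weight_le1 w_ge0 w_sum1).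
  exists (fun i => (f i).1), (fun i => (f i).2); split=> //.
  - by move=> i; have [/= + _] := f_in i; rewrite in_itv => /andP[].
  - by move=> i; have [] := f_in i.
exact: (@continuous_compact _ _ comb _ (continuous_subspaceT comb_cont)
  (compact_closedI box_compact simplex_closed)).
Qed.

End CompactConvn.

Section Constraints.
Variable n : nat.
Notation mat := 'M[R]_n.

Lemma closed_lin_sat m (A : 'I_m -> mat) (b : 'I_m -> R) :
  closed (lin_sat A b).
Proof.
rewrite /lin_sat; apply: closed_forall => i.
by apply: closed_eqf; [exact: inner_continuous | exact: cst_continuous].
Qed.

Lemma closed_symm : closed (@symm R n).
Proof.
have -> : @symm R n = [set X | forall i j, X j i = X i j].
  apply/seteqP; split=> X; first by move=> X_symm i j; rewrite -{1}X_symm mxE.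
  by move=> X_symm; apply/matrixP => i j; rewrite mxE.
apply: closed_forall => i; apply: closed_forall => j.
by apply: closed_eqf; exact: coord_continuous.
Qed.

Lemma closed_psd : closed (@psd R n).
Proof.
rewrite /psd; apply: closedI; first exact: closed_symm.
apply: closed_forall => v; apply: closed_ge0f.
have -> : (fun X : mat => (v^T *m X *m v) 0 0) = inner (v *m v^T).
  apply/funext => X; apply/esym.
  by rewrite /inner -mulmxA mxtrace_mulC trace_mx11.
exact: inner_continuous.
Qed.

Lemma closed_int_sat J (B : 'I_n -> 'I_n -> seq int) :
  closed (@int_sat R n J B).
Proof.
have -> : @int_sat R n J B = \bigcap_(ij in [set ij | ij \in J])
    \bigcup_(z in [set` B ij.1 ij.2]) [set X : mat | X ij.1 ij.2 = z%:~R].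
  apply/seteqP; split=> [X XB [i j] /XB | X XB i j ij]; first by [].
  exact: XB (i, j) ij.
apply: closed_bigI => ij _; rewrite bigcup_seq; apply: closed_bigsetU => z _.
by apply: closed_eqf; [exact: coord_continuous | exact: cst_continuous].
Qed.

End Constraints.
End Topology.

Section Relaxations.
Variables (R : realType) (n m1 m2 : nat).
Variables (A1 : 'I_m1 -> 'M[R]_n) (b1 : 'I_m1 -> R)
  (A2 : 'I_m2 -> 'M[R]_n) (b2 : 'I_m2 -> R)
  (J : {set 'I_n * 'I_n}) (B : 'I_n -> 'I_n -> seq int).

Lemma F_MISDP_sub_F_LD : F_MISDP A1 b1 A2 b2 J B `<=` F_LD A1 b1 A2 b2 J B.
Proof.
move=> X [X1 X2 X_psd XB]; split=> //.
by apply: sub_conv; split=> //; case: X_psd.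
Qed.

Lemma F_LD_sub_F_SDP (l u : 'I_n -> 'I_n -> int) :
  (forall i j, (i, j) \in J ->
     forall z, z \in B i j -> (l i j <= z <= u i j)%R) ->
  F_LD A1 b1 A2 b2 J B `<=` F_SDP A1 b1 A2 b2 J l u.
Proof.
move=> B_le X [X1 X_psd X_conv]; split=> //.
  by apply: (lin_sat_conv _ X_conv) => Y [].
apply: (box_sat_conv _ X_conv) => Y [_ _ YB] i j ij.
have [z zB ->] := YB i j ij.
by have /andP[lz zu] := B_le i j ij z zB; rewrite !ler_int lz zu.
Qed.

Lemma closed_F_MISDP : closed (F_MISDP A1 b1 A2 b2 J B).
Proof.
apply: closed_and4; [exact: closed_lin_sat | exact: closed_lin_sat |
  exact: closed_psd | exact: closed_int_sat].
Qed.

Lemma compact_F_LD :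
  bounded (P_set A2 b2 J B) -> compact (F_LD A1 b1 A2 b2 J B).
Proof.
move=> P_bounded.
have P_compact : compact (P_set A2 b2 J B).
  apply: (bounded_closed_compact_mx P_bounded).
  apply: closed_and3; [exact: closed_symm | exact: closed_lin_sat |
    exact: closed_int_sat].
have -> : F_LD A1 b1 A2 b2 J B =
    convn (P_set A2 b2 J B) (n * n).+1 `&` (lin_sat A1 b1 `&` @psd R n).
  apply/seteqP; split=> [X [X1 X_psd /caratheodory XP] | X [XP [X1 X_psd]]].
    by split.
  by split=> //; exists (n * n).+1.
apply: compact_closedI; first exact: compact_convn.
by apply: closedI; [exact: closed_lin_sat | exact: closed_psd].
Qed.

End Relaxations.

Unset Implicit Arguments. Set Strict Implicit.

Theorem theorem2 (R : realType) (n m1 m2 : nat) (C : 'M[R]_n)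
  (A1 : 'I_m1 -> 'M[R]_n) (b1 : 'I_m1 -> R)
  (A2 : 'I_m2 -> 'M[R]_n) (b2 : 'I_m2 -> R)
  (J : {set 'I_n * 'I_n}) (B : 'I_n -> 'I_n -> seq int)
  (l u : 'I_n -> 'I_n -> int) :
  symm C ->
  (forall i, symm (A1 i)) ->
  (forall i, symm (A2 i)) ->
  (* l_ij and u_ij are the smallest and largest elements of B_ij *)
  (forall i j, (i, j) \in J ->
     [/\ l i j \in B i j, u i j \in B i j
       & forall z, z \in B i j -> ((l i j <= z) && (z <= u i j))%R]) ->
  (* P is bounded *)
  bounded (P_set A2 b2 J B) ->
  (* (MISDP) is feasible with bounded feasible set *)
  F_MISDP A1 b1 A2 b2 J B !=set0 ->
  bounded (F_MISDP A1 b1 A2 b2 J B) ->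
  let F_M := F_MISDP A1 b1 A2 b2 J B in
  let F_S := F_SDP A1 b1 A2 b2 J l u in
  let F_L := F_LD A1 b1 A2 b2 J B in
  (optval C F_L = optval C F_M <->
     (forall X, argmins C F_M X -> normal_cone F_L X (- C))) /\
  (optval C F_S = optval C F_L <->
     (forall X, argmins C F_L X -> normal_cone F_S X (- C))).
Proof.
move=> C_symm _ _ B_lu P_bounded [X0 F_M_X0] _ F_M F_S F_L.
have F_M_sub_F_L : F_M `<=` F_L by exact: F_MISDP_sub_F_LD.
have F_L_compact : compact F_L by exact: compact_F_LD.
have F_M_compact : compact F_M.
  by apply: subclosed_compact F_L_compact F_M_sub_F_L; exact: closed_F_MISDP.
split; apply: optval_eq_normal_coneP => //.
- exact: compact_argmins (ex_intro _ X0 F_M_X0) F_M_compact.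
- by apply: F_LD_sub_F_SDP => i j /B_lu[].
- exact: compact_argmins (ex_intro _ X0 (F_M_sub_F_L X0 F_M_X0)) F_L_compact.
Qed.
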